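(* Let $k_0\in\mathbb{R}\setminus\{0\}$, $N\ge 0$, and real numbers $x_1<\dots<x_N$. Put $I_0=(-\infty,x_1)$, $I_j=(x_j,x_{j+1})$ for $1\le j\le N-1$, $I_N=(x_N,\infty)$ (if $N=0$, $I_0=\mathbb{R}$). Let $w_j:I_j\to\mathbb{C}$, $j=0,\dots,N$, be continuous and piecewise differentiable, and assume: (a) for each $j=1,\dots,N$, the functions $w_j^-(x):=w_{j-1}(x)-\frac{i}{x-x_j}$ on $I_{j-1}$ and $w_j^+(x):=w_j(x)-\frac{i}{x-x_j}$ on $I_j$ are bounded as $x\to x_j-0$ and as $x\to x_j+0$, respectively; (b) $w_0(x)=k_0+\tilde w_{-\infty}(x)$ with $\tilde w_{-\infty}(x)=O(|x|^{-2})$ as $x\to-\infty$, and $w_N(x)=-k_0+\tilde w_{\infty}(x)$ with $\tilde w_\infty(x)=O(|x|^{-2})$ as $x\to+\infty$. Choose arbitrary points $X_j\in I_j$ ($j=0,\dots,N$) and an arbitrary $\rho_0\in\mathbb{C}\setminus\{0\}$, and define recursively for $j=1,\dots,N$ $$\rho_j=\rho_{j-1}\,\frac{X_j-x_j}{X_{j-1}-x_j}\exp\!\Big[i\int_{X_j}^{x_j}w_j^+(\xi)\,d\xi-i\int_{X_{j-1}}^{x_j}w_j^-(\xi)\,d\xi\Big].$$ Define $\psi_0(x)=\rho_j\exp\!\big[-i\int_{X_j}^{x}w_j(\xi)\,d\xi\big]$ for $x\in I_j$, and $\psi_0(x_j)=0$ for $j=1,\dots,N$. Then: (1) $\psi_0\in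 C^1(\mathbb{R})$; (2) there exist nonzero constants $\rho_\pm\in\mathbb{C}$ with $\lim_{x\to\pm\infty}[\psi_0(x)-\rho_\pm e^{\pm ik_0x}]=0$; (3) for each $j$, at every point of $I_j$ where $w_j$ is differentiable, $\psi_0$ satisfies $-\psi_0''+U_j(x)\psi_0=k_0^2\psi_0$ with $U_j(x)=-w_j(x)^2-i\,w_j'(x)+k_0^2$.
   Context: The integrals in the recursion are (convergent) improper integrals up to the endpoint $x_j$. A function with properties (1)–(3) is a spectral-singularity solution of the Schrödinger equation $-\psi''+U\psi=k^2\psi$ at $k=k_0$ with potential $U=-w^2-iw'+k_0^2$ (laser if $k_0>0$, coherent perfect absorber if $k_0<0$). *)

From Stdlib Require Import Reals Lra Lia List.
Open Scope R_scope.

Record Cx := mkC { Cre : R; Cim : R }.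

Definition RtoC (r : R) : Cx := mkC r 0.
Definition Ci : Cx := mkC 0 1.
Definition Cadd (z w : Cx) : Cx := mkC (Cre z + Cre w) (Cim z + Cim w).
Definition Cneg (z : Cx) : Cx := mkC (- Cre z) (- Cim z).
Definition Csub (z w : Cx) : Cx := Cadd z (Cneg w).
Definition Cmul (z w : Cx) : Cx :=
  mkC (Cre z * Cre w - Cim z * Cim w) (Cre z * Cim w + Cim z * Cre w).
Definition Cinv (z : Cx) : Cx :=
  let d := Cre z * Cre z + Cim z * Cim z in mkC (Cre z / d) (- Cim z / d).
Definition Cdiv (z w : Cx) : Cx := Cmul z (Cinv w).
Definition Cexp (z : Cx) : Cx :=
  mkC (exp (Cre z) * cos (Cim z)) (exp (Cre z) * sin (Cim z)).
Definition Cnorm (z : Cx) : R := sqrt (Cre z * Cre z + Cim z * Cim z).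
Definition C0 : Cx := mkC 0 0.

Definition Ccont_at (f : R -> Cx) (t : R) : Prop :=
  continuity_pt (fun s => Cre (f s)) t /\ continuity_pt (fun s => Cim (f s)) t.
Definition CDeriv (f : R -> Cx) (t : R) (d : Cx) : Prop :=
  derivable_pt_lim (fun s => Cre (f s)) t (Cre d) /\
  derivable_pt_lim (fun s => Cim (f s)) t (Cim d).

Definition CInt (g : R -> Cx) (a b : R) (v : Cx) : Prop :=
  exists (pr1 : Riemann_integrable (fun t => Cre (g t)) a b)
         (pr2 : Riemann_integrable (fun t => Cim (g t)) a b),
    RiemannInt pr1 = Cre v /\ RiemannInt pr2 = Cim v.

Definition between_ho (a b t : R) : Prop :=
  (a <= t < b) \/ (b < t <= a).

Definition CImpInt (g : R -> Cx) (a b : R) (v : Cx) : Prop :=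
  a <> b /\
  (forall t, between_ho a b t -> exists u, CInt g a t u) /\
  (forall eps, 0 < eps -> exists delta, 0 < delta /\
     forall t u, between_ho a b t -> Rabs (t - b) < delta ->
       CInt g a t u -> Cnorm (Csub u v) < eps).

(* The intervals: points x 1 < ... < x N, I_0 = (-oo, x 1),
   I_j = (x j, x (j+1)), I_N = (x N, +oo); if N = 0, I_0 = R. *)
Definition inI (N : nat) (x : nat -> R) (j : nat) (t : R) : Prop :=
  (j = 0%nat \/ x j < t) /\ (j = N \/ t < x (S j)).

Definition wminus (w : nat -> R -> Cx) (x : nat -> R) (j : nat) (t : R) : Cx :=
  Csub (w (j - 1)%nat t) (Cdiv Ci (RtoC (t - x j))).
Definition wplus (w : nat -> R -> Cx) (x : nat -> R) (j : nat) (t : R) : Cx :=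
  Csub (w j t) (Cdiv Ci (RtoC (t - x j))).

Definition Ccont_on_I N x j (f : R -> Cx) : Prop :=
  forall t, inI N x j t -> Ccont_at f t.

Definition Cpw_diff_on_I N x j (f : R -> Cx) : Prop :=
  forall a b, inI N x j a -> inI N x j b -> a <= b ->
    exists l : list R, forall t, a <= t <= b -> ~ In t l ->
      exists d, CDeriv f t d.

From Stdlib Require Import Reals Lra Lia List.
From Coquelicot Require Import Rcomplements Rbar Hierarchy Continuity Derive RInt AutoDerive RInt_analysis ElemFct.
Open Scope R_scope.

(* On each interval I_j, psi0 = rho_j exp(-i int w_j) solves psi0' = -i w_j psi0; hence psi0 is C^1
   there, and differentiating once more gives the Schroedinger equation with
   U_j = -w_j^2 - i w_j' + k0^2.
   Near a node x_j write w = w_j^(+-) + i/(t - x_j). The pole integrates to a logarithm, so on both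
   sides psi0(t) = (t - x_j) Q(t), where Q tends to rho_j e^(-i A_j) / (X_j - x_j) from the right and
   to rho_(j-1) e^(-i B_j) / (X_(j-1) - x_j) from the left. The recursion defining rho_j makes the
   two limits equal, which gives psi0'(x_j); since w_j^(+-) is bounded,
   psi0' = -i w psi0 = -i w^(+-) (t - x_j) Q + Q tends to the same value, so psi0' is continuous.
   At +-oo the O(t^-2) tails make int (w_N + k0) and int (w_0 - k0) converge, so psi0 is
   asymptotically a nonzero multiple of e^(+-i k0 t). *)

Lemma Cx_ext a b : Cre a = Cre b -> Cim a = Cim b -> a = b.
Proof. destruct a, b; simpl; intros; subst; reflexivity. Qed.

Lemma Cexp_add a b : Cexp (Cadd a b) = Cmul (Cexp a) (Cexp b).
Proof. apply Cx_ext; simpl; rewrite exp_plus; [rewrite cos_plus | rewrite sin_plus]; ring. Qed.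

Lemma Cnorm_ge0 z : 0 <= Cnorm z.
Proof. apply sqrt_pos. Qed.

Lemma Cnorm_mul a b : Cnorm (Cmul a b) = Cnorm a * Cnorm b.
Proof. unfold Cnorm; simpl. rewrite <- sqrt_mult by nra. f_equal. ring. Qed.

Lemma Cnorm_neg z : Cnorm (Cneg z) = Cnorm z.
Proof. unfold Cnorm; simpl. f_equal. ring. Qed.

Lemma Cnorm_Ci : Cnorm Ci = 1.
Proof. unfold Cnorm; simpl. replace (0 * 0 + 1 * 1) with 1 by ring. apply sqrt_1. Qed.

Lemma Cnorm_RtoC r : Cnorm (RtoC r) = Rabs r.
Proof. unfold Cnorm; simpl. rewrite <- sqrt_Rsqr_abs. unfold Rsqr. f_equal. ring. Qed.

Lemma Rabs_le_sqrt_sum_sq u v : Rabs u <= sqrt (u * u + v * v).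
Proof. rewrite <- sqrt_Rsqr_abs. apply sqrt_le_1_alt. unfold Rsqr. nra. Qed.

Lemma Rabs_Cre_le z : Rabs (Cre z) <= Cnorm z.
Proof. apply Rabs_le_sqrt_sum_sq. Qed.

Lemma Rabs_Cim_le z : Rabs (Cim z) <= Cnorm z.
Proof. unfold Cnorm. rewrite Rplus_comm. apply Rabs_le_sqrt_sum_sq. Qed.

Lemma Cnorm_le_Rabs_sum z : Cnorm z <= Rabs (Cre z) + Rabs (Cim z).
Proof.
  unfold Cnorm. pose proof (Rabs_pos (Cre z)). pose proof (Rabs_pos (Cim z)).
  rewrite <- (sqrt_Rsqr (Rabs (Cre z) + Rabs (Cim z))) by lra.
  apply sqrt_le_1_alt. pose proof (Rsqr_abs (Cre z)). pose proof (Rsqr_abs (Cim z)).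
  unfold Rsqr in *. nra.
Qed.

Lemma Cnorm_Cexp z : Cnorm (Cexp z) = exp (Cre z).
Proof.
  unfold Cnorm; simpl. pose proof (sin2_cos2 (Cim z)). unfold Rsqr in *.
  transitivity (sqrt (exp (Cre z) * exp (Cre z))).
  - f_equal. transitivity (exp (Cre z) * exp (Cre z) * (sin (Cim z) * sin (Cim z) + cos (Cim z) * cos (Cim z)));
      [ring | rewrite H; ring].
  - apply sqrt_square. left; apply exp_pos.
Qed.

Lemma Cnorm_eq0 z : Cnorm z = 0 -> z = C0.
Proof. unfold Cnorm; intro H. apply sqrt_eq_0 in H; [|nra]. apply Cx_ext; simpl; nra. Qed.

Lemma Cnorm_C0 : Cnorm C0 = 0.
Proof. unfold Cnorm; simpl. rewrite Rmult_0_l, Rplus_0_l. apply sqrt_0. Qed.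

Lemma Cmul_neq0 a b : a <> C0 -> b <> C0 -> Cmul a b <> C0.
Proof.
  intros Ha Hb E. apply (f_equal Cnorm) in E. rewrite Cnorm_C0, Cnorm_mul in E.
  destruct (Rmult_integral _ _ E) as [E'|E']; apply Cnorm_eq0 in E'; auto.
Qed.

Lemma Cexp_neq0 z : Cexp z <> C0.
Proof.
  intro E. apply (f_equal Cnorm) in E. rewrite Cnorm_Cexp, Cnorm_C0 in E.
  pose proof (exp_pos (Cre z)). lra.
Qed.

Lemma RtoC_neq0 r : r <> 0 -> RtoC r <> C0.
Proof. intros Hr E. apply Hr. exact (f_equal Cre E). Qed.

Lemma is_derive_Rmult (f g : R -> R) x a b : is_derive f x a -> is_derive g x b ->
  is_derive (fun s => f s * g s) x (a * g x + f x * b).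
Proof. intros Hf Hg. exact (@is_derive_mult R_AbsRing f g x a b Hf Hg Rmult_comm). Qed.

Lemma is_derive_Rplus (f g : R -> R) x a b : is_derive f x a -> is_derive g x b ->
  is_derive (fun s => f s + g s) x (a + b).
Proof. intros Hf Hg. exact (@is_derive_plus R_AbsRing R_NormedModule f g x a b Hf Hg). Qed.

Lemma is_derive_Rminus (f g : R -> R) x a b : is_derive f x a -> is_derive g x b ->
  is_derive (fun s => f s - g s) x (a - b).
Proof. intros Hf Hg. exact (@is_derive_minus R_AbsRing R_NormedModule f g x a b Hf Hg). Qed.

Lemma is_derive_Ropp (f : R -> R) x a : is_derive f x a -> is_derive (fun s => - f s) x (- a).
Proof. intros Hf. exact (@is_derive_opp R_AbsRing R_NormedModule f x a Hf). Qed.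

Lemma is_derive_Rcomp (g f : R -> R) x dg a : is_derive g (f x) dg -> is_derive f x a ->
  is_derive (fun s => g (f s)) x (dg * a).
Proof.
  intros Hg Hf.
  replace (dg * a) with (scal a dg) by (unfold scal; simpl; unfold mult; simpl; ring).
  exact (is_derive_comp g f x dg a Hg Hf).
Qed.

Definition Cis_derive (f : R -> Cx) t d :=
  is_derive (fun s => Cre (f s)) t (Cre d) /\ is_derive (fun s => Cim (f s)) t (Cim d).

(* Total; a junk value where [f] is not differentiable. *)
Definition CDerive (f : R -> Cx) t : Cx :=
  mkC (Derive (fun s => Cre (f s)) t) (Derive (fun s => Cim (f s)) t).

Lemma Cis_derive_CDeriv f t d : Cis_derive f t d <-> CDeriv f t d.
Proof. unfold Cis_derive, CDeriv. rewrite !is_derive_Reals. tauto. Qed.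

Lemma Cis_derive_unique f t d : Cis_derive f t d -> CDerive f t = d.
Proof. intros [H1 H2]. apply Cx_ext; apply is_derive_unique; assumption. Qed.

Lemma Cis_derive_eq f t d d' : Cis_derive f t d -> d = d' -> Cis_derive f t d'.
Proof. intros H ->; exact H. Qed.

Lemma Cis_derive_const c t : Cis_derive (fun _ => c) t C0.
Proof. split; apply (@is_derive_const R_AbsRing R_NormedModule). Qed.

Lemma Cis_derive_mul f g t a b : Cis_derive f t a -> Cis_derive g t b ->
  Cis_derive (fun s => Cmul (f s) (g s)) t (Cadd (Cmul a (g t)) (Cmul (f t) b)).
Proof.
  intros [Hf1 Hf2] [Hg1 Hg2]; split; simpl.
  - replace (_ + _) with ((Cre a * Cre (g t) + Cre (f t) * Cre b) - (Cim a * Cim (g t) + Cim (f t) * Cim b)) by ring.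
    apply is_derive_Rminus; apply is_derive_Rmult; assumption.
  - replace (_ + _) with ((Cre a * Cim (g t) + Cre (f t) * Cim b) + (Cim a * Cre (g t) + Cim (f t) * Cre b)) by ring.
    apply is_derive_Rplus; apply is_derive_Rmult; assumption.
Qed.

Lemma Cis_derive_neg f t a : Cis_derive f t a -> Cis_derive (fun s => Cneg (f s)) t (Cneg a).
Proof. intros [Hf1 Hf2]; split; apply is_derive_Ropp; assumption. Qed.

Lemma Cis_derive_exp f t a : Cis_derive f t a ->
  Cis_derive (fun s => Cexp (f s)) t (Cmul (Cexp (f t)) a).
Proof.
  intros [Hf1 Hf2]; split; simpl.
  - replace (_ - _) with ((exp (Cre (f t)) * Cre a) * cos (Cim (f t)) + exp (Cre (f t)) * (- sin (Cim (f t)) * Cim a)) by ring.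
    apply (is_derive_Rmult (fun s => exp (Cre (f s))) (fun s => cos (Cim (f s))));
      [apply (is_derive_Rcomp exp (fun s => Cre (f s))) | apply (is_derive_Rcomp cos (fun s => Cim (f s)))];
      auto using is_derive_exp, is_derive_cos.
  - replace (_ + _) with ((exp (Cre (f t)) * Cre a) * sin (Cim (f t)) + exp (Cre (f t)) * (cos (Cim (f t)) * Cim a)) by ring.
    apply (is_derive_Rmult (fun s => exp (Cre (f s))) (fun s => sin (Cim (f s))));
      [apply (is_derive_Rcomp exp (fun s => Cre (f s))) | apply (is_derive_Rcomp sin (fun s => Cim (f s)))];
      auto using is_derive_exp, is_derive_sin.
Qed.

Lemma Cis_derive_ext_loc f g t d : locally t (fun s => f s = g s) ->
  Cis_derive f t d -> Cis_derive g t d.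
Proof.
  intros Hl [H1 H2]; split; (eapply is_derive_ext_loc; [|eassumption]);
    (eapply filter_imp; [|exact Hl]); intros s ->; reflexivity.
Qed.

Lemma ball_R (x e y : R) : ball x e y <-> Rabs (y - x) < e.
Proof. unfold ball; simpl; unfold AbsRing_ball, abs, minus, plus, opp; simpl. tauto. Qed.

Section RealLimits.
Context {F : (R -> Prop) -> Prop} {FF : Filter F}.

Lemma filterlim_Rplus (u v : R -> R) a b :
  filterlim u F (locally a) -> filterlim v F (locally b) ->
  filterlim (fun t => u t + v t) F (locally (a + b)).
Proof. intros Hu Hv. exact (filterlim_comp_2 u v Rplus Hu Hv (@filterlim_plus R_AbsRing R_NormedModule a b)). Qed.

Lemma filterlim_Rmult (u v : R -> R) a b :
  filterlim u F (locally a) -> filterlim v F (locally b) ->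
  filterlim (fun t => u t * v t) F (locally (a * b)).
Proof. intros Hu Hv. exact (filterlim_comp_2 u v Rmult Hu Hv (@filterlim_mult R_AbsRing a b)). Qed.

Lemma filterlim_Ropp (u : R -> R) a :
  filterlim u F (locally a) -> filterlim (fun t => - u t) F (locally (- a)).
Proof. intros Hu. exact (filterlim_comp _ _ _ u Ropp _ _ _ Hu (@filterlim_opp R_AbsRing R_NormedModule a)). Qed.

Lemma filterlim_Rminus (u v : R -> R) a b :
  filterlim u F (locally a) -> filterlim v F (locally b) ->
  filterlim (fun t => u t - v t) F (locally (a - b)).
Proof. intros Hu Hv. apply filterlim_Rplus; auto. apply filterlim_Ropp; auto. Qed.

Lemma filterlim_continuous_comp (u g : R -> R) a :
  continuous g a -> filterlim u F (locally a) -> filterlim (fun t => g (u t)) F (locally (g a)).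
Proof. intros Hg Hu. exact (filterlim_comp _ _ _ u g _ _ _ Hu Hg). Qed.

End RealLimits.

Definition Cfilterlim (F : (R -> Prop) -> Prop) (f : R -> Cx) (L : Cx) :=
  filterlim (fun s => Cre (f s)) F (locally (Cre L)) /\
  filterlim (fun s => Cim (f s)) F (locally (Cim L)).

Section ComplexLimits.
Context {F : (R -> Prop) -> Prop} {FF : Filter F}.

Lemma Cfilterlim_eq f a b : Cfilterlim F f a -> a = b -> Cfilterlim F f b.
Proof. intros H ->; exact H. Qed.

Lemma Cfilterlim_const c : Cfilterlim F (fun _ => c) c.
Proof. split; apply filterlim_const. Qed.

Lemma Cfilterlim_add f g a b : Cfilterlim F f a -> Cfilterlim F g b ->
  Cfilterlim F (fun t => Cadd (f t) (g t)) (Cadd a b).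
Proof. intros [H1 H2] [H3 H4]; split; simpl; apply filterlim_Rplus; auto. Qed.

Lemma Cfilterlim_neg f a : Cfilterlim F f a -> Cfilterlim F (fun t => Cneg (f t)) (Cneg a).
Proof. intros [H1 H2]; split; simpl; apply filterlim_Ropp; auto. Qed.

Lemma Cfilterlim_mul f g a b : Cfilterlim F f a -> Cfilterlim F g b ->
  Cfilterlim F (fun t => Cmul (f t) (g t)) (Cmul a b).
Proof.
  intros [H1 H2] [H3 H4]; split; simpl.
  - apply filterlim_Rminus; apply filterlim_Rmult; auto.
  - apply filterlim_Rplus; apply filterlim_Rmult; auto.
Qed.

Lemma Cfilterlim_mul_l c f a : Cfilterlim F f a ->
  Cfilterlim F (fun t => Cmul c (f t)) (Cmul c a).
Proof. intros H. apply Cfilterlim_mul; [apply Cfilterlim_const | exact H]. Qed.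

Lemma Cfilterlim_exp f a : Cfilterlim F f a -> Cfilterlim F (fun t => Cexp (f t)) (Cexp a).
Proof.
  intros [H1 H2]; split; simpl; apply filterlim_Rmult;
    apply filterlim_continuous_comp; auto using continuous_exp, continuous_cos, continuous_sin.
Qed.

Lemma Cfilterlim_ext_loc f g L : F (fun t => f t = g t) -> Cfilterlim F f L -> Cfilterlim F g L.
Proof.
  intros He [H1 H2]; split; (eapply filterlim_ext_loc; [|eassumption]);
    (eapply filter_imp; [|exact He]); intros t ->; reflexivity.
Qed.

Lemma Cfilterlim_Cnorm_lt f L : Cfilterlim F f L ->
  forall eps, 0 < eps -> F (fun t => Cnorm (Csub (f t) L) < eps).
Proof.
  intros [H1 H2] eps Heps. rewrite filterlim_locally in H1, H2.
  specialize (H1 (mkposreal (eps/2) ltac:(lra))). specialize (H2 (mkposreal (eps/2) ltac:(lra))).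
  generalize (filter_and _ _ H1 H2). apply filter_imp. intros t [Ha Hb].
  rewrite ball_R in Ha, Hb. simpl in Ha, Hb.
  eapply Rle_lt_trans; [apply Cnorm_le_Rabs_sum|]. simpl. unfold Rminus in *. lra.
Qed.

Lemma Cfilterlim_of_Cnorm_lt f L :
  (forall eps, 0 < eps -> F (fun t => Cnorm (Csub (f t) L) < eps)) -> Cfilterlim F f L.
Proof.
  intros H; split; apply filterlim_locally; intros [eps Heps];
    (eapply filter_imp; [|apply (H eps Heps)]); intros t Ht; rewrite ball_R; simpl;
    (eapply Rle_lt_trans; [|exact Ht]).
  - apply (Rabs_Cre_le (Csub (f t) L)).
  - apply (Rabs_Cim_le (Csub (f t) L)).
Qed.

Lemma Cfilterlim_Cnorm f L : Cfilterlim F f L ->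
  filterlim (fun t => Cnorm (f t)) F (locally (Cnorm L)).
Proof.
  intros [H1 H2]. apply filterlim_continuous_comp; [apply continuous_sqrt|].
  apply filterlim_Rplus; apply filterlim_Rmult; auto.
Qed.

Lemma Cfilterlim_dominated f r :
  F (fun t => Cnorm (f t) <= r t) -> filterlim r F (locally 0) -> Cfilterlim F f C0.
Proof.
  intros Hb Hr. apply Cfilterlim_of_Cnorm_lt. intros eps Heps.
  rewrite filterlim_locally in Hr. specialize (Hr (mkposreal eps Heps)).
  generalize (filter_and _ _ Hb Hr). apply filter_imp. intros t [H1 H2].
  rewrite ball_R in H2; simpl in H2. apply Rabs_lt_between in H2.
  replace (Csub (f t) C0) with (f t) by (apply Cx_ext; simpl; ring). lra.
Qed.

End ComplexLimits.

Lemma Cfilterlim_filter_le F1 F2 f L : filter_le F2 F1 -> Cfilterlim F1 f L -> Cfilterlim F2 f L.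
Proof. intros Hle [H1 H2]; split; eapply filterlim_filter_le_1; eassumption. Qed.

Lemma Ccont_at_Cfilterlim f t : Ccont_at f t <-> Cfilterlim (locally t) f (f t).
Proof. unfold Ccont_at, Cfilterlim. rewrite !continuity_pt_filterlim. tauto. Qed.

Lemma Cis_derive_Ccont_at f t d : Cis_derive f t d -> Ccont_at f t.
Proof.
  intros [H1 H2]. apply Ccont_at_Cfilterlim. split;
    apply (@ex_derive_continuous R_AbsRing R_NormedModule); eexists; eassumption.
Qed.

Lemma at_right_intro c (P : R -> Prop) :
  (exists d, 0 < d /\ forall t, c < t < c + d -> P t) -> at_right c P.
Proof.
  intros [d [Hd H]]. exists (mkposreal d Hd). intros t Ht Hct. rewrite ball_R in Ht; simpl in Ht.
  apply H. apply Rabs_lt_between in Ht. lra.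
Qed.

Lemma at_left_intro c (P : R -> Prop) :
  (exists d, 0 < d /\ forall t, c - d < t < c -> P t) -> at_left c P.
Proof.
  intros [d [Hd H]]. exists (mkposreal d Hd). intros t Ht Hct. rewrite ball_R in Ht; simpl in Ht.
  apply H. apply Rabs_lt_between in Ht. lra.
Qed.

Lemma at_right_elim c (P : R -> Prop) : at_right c P ->
  exists d, 0 < d /\ forall t, c < t < c + d -> P t.
Proof.
  intros [[d Hd] H]. exists d; split; auto. intros t Ht. apply H; [|lra].
  rewrite ball_R; simpl. apply Rabs_lt_between. lra.
Qed.

Lemma at_left_elim c (P : R -> Prop) : at_left c P ->
  exists d, 0 < d /\ forall t, c - d < t < c -> P t.
Proof.
  intros [[d Hd] H]. exists d; split; auto. intros t Ht. apply H; [|lra].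
  rewrite ball_R; simpl. apply Rabs_lt_between. lra.
Qed.

Lemma locally_intro c (P : R -> Prop) :
  (exists d, 0 < d /\ forall t, c - d < t < c + d -> P t) -> locally c P.
Proof.
  intros [d [Hd H]]. exists (mkposreal d Hd). intros t Ht. rewrite ball_R in Ht; simpl in Ht.
  apply H. apply Rabs_lt_between in Ht. lra.
Qed.

Lemma at_right_lt c d : 0 < d -> at_right c (fun t => t < c + d).
Proof. intros Hd. apply at_right_intro. exists d; split; [exact Hd|]. intros t Ht; apply Ht. Qed.

Lemma at_left_gt c d : 0 < d -> at_left c (fun t => c - d < t).
Proof. intros Hd. apply at_left_intro. exists d; split; [exact Hd|]. intros t Ht; apply Ht. Qed.

Lemma filterlim_id_at_right c : filterlim (fun t => t) (at_right c) (locally c).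
Proof. eapply filterlim_filter_le_1; [apply filter_le_within | apply filterlim_id]. Qed.

Lemma filterlim_id_at_left c : filterlim (fun t => t) (at_left c) (locally c).
Proof. eapply filterlim_filter_le_1; [apply filter_le_within | apply filterlim_id]. Qed.

Lemma locally_of_sides c (P : R -> Prop) : P c -> at_right c P -> at_left c P -> locally c P.
Proof.
  intros H0 Hr Hl.
  destruct (at_right_elim _ _ Hr) as [d1 [Hd1 H1]]. destruct (at_left_elim _ _ Hl) as [d2 [Hd2 H2]].
  apply locally_intro. exists (Rmin d1 d2); split; [apply Rmin_glb_lt; auto|].
  pose proof (Rmin_l d1 d2). pose proof (Rmin_r d1 d2).
  intros t Ht. destruct (Rtotal_order t c) as [Hlt|[->|Hgt]]; auto with real.
  - apply H2; lra.
  - apply H1; lra.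
Qed.

Lemma derivable_pt_lim_of_sides (f : R -> R) c l :
  filterlim (fun t => (f t - f c) / (t - c)) (at_right c) (locally l) ->
  filterlim (fun t => (f t - f c) / (t - c)) (at_left c) (locally l) ->
  derivable_pt_lim f c l.
Proof.
  intros Hr Hl eps Heps.
  set (P t := t <> c -> ball l eps ((f t - f c) / (t - c))).
  assert (HP : locally c P).
  { apply locally_of_sides; [intros []; reflexivity| |];
      [eapply filter_imp, (proj1 (filterlim_locally _ _) Hr (mkposreal eps Heps)) |
       eapply filter_imp, (proj1 (filterlim_locally _ _) Hl (mkposreal eps Heps))];
      intros t Ht _; exact Ht. }
  destruct HP as [d Hd]. exists d. intros h Hh0 Hh.
  assert (Hb : ball c d (c + h)) by (apply ball_R; replace (c + h - c) with h by ring; exact Hh).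
  specialize (Hd _ Hb ltac:(lra)). rewrite ball_R in Hd.
  replace (c + h - c) with h in Hd by ring. exact Hd.
Qed.

Lemma continuous_of_sides (f : R -> R) c :
  filterlim f (at_right c) (locally (f c)) -> filterlim f (at_left c) (locally (f c)) ->
  filterlim f (locally c) (locally (f c)).
Proof.
  intros Hr Hl. apply filterlim_locally. intros eps.
  apply locally_of_sides; [apply ball_center | apply (proj1 (filterlim_locally _ _) Hr)
                          | apply (proj1 (filterlim_locally _ _) Hl)].
Qed.

Lemma ex_RInt_of_continuous (f : R -> R) a b :
  (forall s, Rmin a b <= s <= Rmax a b -> continuous f s) -> ex_RInt f a b.
Proof. intros H. exact (@ex_RInt_continuous R_CompleteNormedModule f a b H). Qed.

Lemma RInt_Chasles_R (f : R -> R) a b c : ex_RInt f a b -> ex_RInt f b c ->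
  RInt f a b + RInt f b c = RInt f a c.
Proof. intros H1 H2. exact (@RInt_Chasles R_CompleteNormedModule f a b c H1 H2). Qed.

Lemma Rabs_RInt_le_const (f : R -> R) u v M : ex_RInt f u v ->
  (forall s, Rmin u v <= s <= Rmax u v -> Rabs (f s) <= M) ->
  Rabs (RInt f u v) <= Rabs (v - u) * M.
Proof.
  intros Hex Hb. destruct (Rle_or_lt u v) as [Huv|Huv].
  - rewrite (Rabs_right (v - u)) by lra. apply abs_RInt_le_const; auto.
    intros t Ht. apply Hb. rewrite Rmin_left, Rmax_right; lra.
  - rewrite <- (Rabs_Ropp (RInt f u v)).
    change (- RInt f u v) with (opp (RInt f u v)). rewrite opp_RInt_swap by exact Hex.
    replace (Rabs (v - u)) with (u - v) by (rewrite Rabs_left; lra).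
    apply abs_RInt_le_const; [lra | apply ex_RInt_swap; exact Hex |].
    intros t Ht. apply Hb. rewrite Rmin_right, Rmax_left; lra.
Qed.

Definition is_interval (S : R -> Prop) :=
  forall a b s, S a -> S b -> Rmin a b <= s <= Rmax a b -> S s.

Definition CRInt (g : R -> Cx) a t :=
  mkC (RInt (fun s => Cre (g s)) a t) (RInt (fun s => Cim (g s)) a t).

Lemma continuous_Cre g s : Ccont_at g s -> continuous (fun u => Cre (g u)) s.
Proof. intros [H _]. apply continuity_pt_filterlim. exact H. Qed.

Lemma continuous_Cim g s : Ccont_at g s -> continuous (fun u => Cim (g u)) s.
Proof. intros [_ H]. apply continuity_pt_filterlim. exact H. Qed.

Lemma ex_RInt_Cre_Cim g a b : (forall s, Rmin a b <= s <= Rmax a b -> Ccont_at g s) ->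
  ex_RInt (fun s => Cre (g s)) a b /\ ex_RInt (fun s => Cim (g s)) a b.
Proof.
  intros H; split; apply ex_RInt_of_continuous; intros s Hs;
    [apply continuous_Cre | apply continuous_Cim]; auto.
Qed.

Lemma ex_RInt_Cre_Cim_interval S g a b : is_interval S -> (forall s, S s -> Ccont_at g s) ->
  S a -> S b -> ex_RInt (fun s => Cre (g s)) a b /\ ex_RInt (fun s => Cim (g s)) a b.
Proof. intros Hc Hg Ha Hb. apply ex_RInt_Cre_Cim. intros s Hs. apply Hg, (Hc a b s); auto. Qed.

Lemma CInt_CRInt g a b : ex_RInt (fun s => Cre (g s)) a b -> ex_RInt (fun s => Cim (g s)) a b ->
  CInt g a b (CRInt g a b).
Proof.
  intros H1 H2. exists (ex_RInt_Reals_0 _ _ _ H1), (ex_RInt_Reals_0 _ _ _ H2).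
  simpl. split; symmetry; apply RInt_Reals.
Qed.

Lemma CInt_unique g a b v : CInt g a b v -> v = CRInt g a b.
Proof.
  intros [p1 [p2 [H1 H2]]].
  apply Cx_ext; simpl; [rewrite <- H1 | rewrite <- H2]; symmetry; apply RInt_Reals.
Qed.

Lemma Cis_derive_CRInt S g a t : is_interval S -> locally t S ->
  (forall s, S s -> Ccont_at g s) -> S a -> S t -> Cis_derive (CRInt g a) t (g t).
Proof.
  intros Hc Hl Hg Ha Ht.
  assert (Hloc : locally t (fun b => ex_RInt (fun s => Cre (g s)) a b /\ ex_RInt (fun s => Cim (g s)) a b)).
  { eapply filter_imp; [|exact Hl]. intros b Hb. apply (ex_RInt_Cre_Cim_interval S); auto. }
  split; simpl.
  - apply (is_derive_RInt (fun s => Cre (g s)) (fun b => RInt (fun s => Cre (g s)) a b) a t).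
    + eapply filter_imp; [|exact Hloc]. intros b [Hb _]. apply (@RInt_correct R_CompleteNormedModule), Hb.
    + apply continuous_Cre; auto.
  - apply (is_derive_RInt (fun s => Cim (g s)) (fun b => RInt (fun s => Cim (g s)) a b) a t).
    + eapply filter_imp; [|exact Hloc]. intros b [_ Hb]. apply (@RInt_correct R_CompleteNormedModule), Hb.
    + apply continuous_Cim; auto.
Qed.

Lemma CRInt_add_const g k a t :
  ex_RInt (fun s => Cre (g s)) a t ->
  CRInt (fun s => Cadd (g s) (RtoC k)) a t = Cadd (CRInt g a t) (RtoC (k * (t - a))).
Proof.
  intros E. apply Cx_ext; unfold CRInt; simpl.
  - change (RInt (fun s => plus (Cre (g s)) k) a t = RInt (fun s => Cre (g s)) a t + k * (t - a)).
    rewrite (@RInt_plus R_CompleteNormedModule), RInt_const; [|exact E | apply ex_RInt_const].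
    unfold plus, scal; simpl; unfold mult; simpl. ring.
  - rewrite Rplus_0_r. apply RInt_ext. intros; apply Rplus_0_r.
Qed.

(* [wplus w x j] is [sub_pole (w j) (x j)], and [wminus w x j] is [sub_pole (w (j - 1)) (x j)]. *)
Definition sub_pole (f : R -> Cx) (c : R) (s : R) : Cx := Csub (f s) (Cdiv Ci (RtoC (s - c))).

Lemma Cre_sub_pole f c s : Cre (sub_pole f c s) = Cre (f s).
Proof. unfold sub_pole; simpl. unfold Rdiv. rewrite Ropp_0. ring. Qed.

(* At [s = c] both sides are [Cim (f c)], as [/ 0 = 0]. *)
Lemma Cim_sub_pole f c s : Cim (sub_pole f c s) = Cim (f s) - / (s - c).
Proof.
  unfold sub_pole; simpl. destruct (Req_dec (s - c) 0) as [H|H].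
  - rewrite H. replace (0 * 0 + 0 * 0) with 0 by ring. unfold Rdiv. rewrite Rinv_0. ring.
  - field. exact H.
Qed.

Lemma continuous_inv_shift c s : s <> c -> continuous (fun u => / (u - c)) s.
Proof. intros H. apply (@ex_derive_continuous R_AbsRing R_NormedModule). auto_derive. lra. Qed.

Lemma Ccont_sub_pole f c s : Ccont_at f s -> s <> c -> Ccont_at (sub_pole f c) s.
Proof.
  intros Hf Hs. split; apply continuity_pt_filterlim.
  - change (continuous (fun u => Cre (sub_pole f c u)) s).
    eapply continuous_ext; [intros u; symmetry; apply Cre_sub_pole|]. apply continuous_Cre, Hf.
  - change (continuous (fun u => Cim (sub_pole f c u)) s).
    eapply continuous_ext; [intros u; symmetry; apply Cim_sub_pole|].
    apply (@continuous_minus R_UniformSpace R_AbsRing R_NormedModule (fun u => Cim (f u)) (fun u => / (u - c))).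
    + apply continuous_Cim, Hf.
    + apply continuous_inv_shift, Hs.
Qed.

Lemma is_RInt_inv_shift c a t : (forall s, Rmin a t <= s <= Rmax a t -> 0 < (s - c) / (a - c)) ->
  is_RInt (fun s => / (s - c)) a t (ln ((t - c) / (a - c))).
Proof.
  intros Hpos.
  assert (Hs : forall s, Rmin a t <= s <= Rmax a t -> s - c <> 0).
  { intros s Hs E. specialize (Hpos s Hs). rewrite E in Hpos. unfold Rdiv in Hpos. lra. }
  assert (Hac : a - c <> 0) by (apply Hs; split; [apply Rmin_l | apply Rmax_l]).
  replace (ln ((t - c) / (a - c))) with (minus (ln ((t - c) / (a - c))) (ln ((a - c) / (a - c))))
    by (rewrite Rdiv_diag, ln_1 by exact Hac; unfold minus, plus, opp; simpl; ring).
  apply (@is_RInt_derive R_CompleteNormedModule (fun s => ln ((s - c) / (a - c)))).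
  - intros s Hs0. specialize (Hpos s Hs0). specialize (Hs s Hs0).
    auto_derive; [lra|]. field. split; auto.
  - intros s Hs0. apply continuous_inv_shift. specialize (Hs s Hs0). lra.
Qed.

(* The pole [i/(s-c)] integrates to [i ln((t-c)/(a-c))], which [exp(-i .)] turns into a linear factor. *)
Lemma Cexp_CRInt_sub_pole f c a t :
  (forall s, Rmin a t <= s <= Rmax a t -> Ccont_at f s /\ 0 < (s - c) / (a - c)) ->
  Cexp (Cneg (Cmul Ci (CRInt f a t))) =
  Cmul (RtoC ((t - c) / (a - c))) (Cexp (Cneg (Cmul Ci (CRInt (sub_pole f c) a t)))).
Proof.
  intros H.
  assert (Hpos : forall s, Rmin a t <= s <= Rmax a t -> 0 < (s - c) / (a - c)) by apply H.
  assert (Hne : forall s, Rmin a t <= s <= Rmax a t -> s <> c).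
  { intros s Hs E. specialize (Hpos s Hs). rewrite E, Rminus_diag in Hpos. unfold Rdiv in Hpos. lra. }
  pose proof (is_RInt_inv_shift c a t Hpos) as HI.
  destruct (ex_RInt_Cre_Cim (sub_pole f c) a t) as [_ E].
  { intros s Hs. apply Ccont_sub_pole; [apply H | apply Hne]; auto. }
  assert (Hre : RInt (fun s => Cre (f s)) a t = RInt (fun s => Cre (sub_pole f c s)) a t).
  { apply RInt_ext. intros; rewrite Cre_sub_pole; auto. }
  assert (Him : RInt (fun s => Cim (f s)) a t =
     RInt (fun s => Cim (sub_pole f c s)) a t + ln ((t - c) / (a - c))).
  { rewrite <- (is_RInt_unique _ _ _ _ HI).
    rewrite (RInt_ext (fun s => Cim (f s)) (fun s => plus (Cim (sub_pole f c s)) (/ (s - c)))).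
    - apply (@RInt_plus R_CompleteNormedModule); [exact E | eexists; exact HI].
    - intros s _. rewrite Cim_sub_pole. unfold plus; simpl. ring. }
  assert (Hr : 0 < (t - c) / (a - c)) by (apply Hpos; split; [apply Rmin_r | apply Rmax_r]).
  unfold CRInt at 1. rewrite Hre, Him.
  unfold CRInt.
  generalize (RInt (fun s => Cre (sub_pole f c s)) a t) (RInt (fun s => Cim (sub_pole f c s)) a t).
  intros u v. apply Cx_ext; simpl;
    replace (- (0 * u - 1 * (v + ln ((t - c) / (a - c))))) with (- (0 * u - 1 * v) + ln ((t - c) / (a - c))) by ring;
    replace (- (0 * (v + ln ((t - c) / (a - c))) + 1 * u)) with (- (0 * v + 1 * u)) by ring;
    rewrite exp_plus, exp_ln by exact Hr; ring.
Qed.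

(** * Improper integrals *)

Ltac minmax_lra := unfold Rmin, Rmax in *;
  repeat match goal with
  | |- context [Rle_dec ?a ?b] => destruct (Rle_dec a b)
  | H : context [Rle_dec ?a ?b] |- _ => destruct (Rle_dec a b)
  end; lra.

(* The filter along which [CImpInt] takes its limit. *)
Definition toward a c (P : R -> Prop) :=
  exists d, 0 < d /\ forall t, between_ho a c t -> Rabs (t - c) < d -> P t.

Instance toward_filter a c : Filter (toward a c).
Proof.
  constructor.
  - exists 1; split; [lra|]; auto.
  - intros P Q [d1 [H1 P1]] [d2 [H2 P2]]. exists (Rmin d1 d2); split; [apply Rmin_glb_lt; auto|].
    intros t Hb Ht. pose proof (Rmin_l d1 d2). pose proof (Rmin_r d1 d2).
    split; [apply P1 | apply P2]; auto; lra.
  - intros P Q HPQ [d [Hd HP]]. exists d; split; auto.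
Qed.

Lemma toward_proper a c : a <> c -> ProperFilter (toward a c).
Proof.
  intros Hac. constructor; [|apply toward_filter].
  intros P [d [Hd HP]]. destruct (Rlt_or_le a c) as [Hlt|Hle].
  - exists (Rmax a (c - d / 2)). assert (Rmax a (c - d / 2) < c) by (apply Rmax_lub_lt; lra).
    pose proof (Rmax_l a (c - d / 2)). pose proof (Rmax_r a (c - d / 2)).
    apply HP; [left; lra | rewrite Rabs_left; lra].
  - exists (Rmin a (c + d / 2)). assert (c < Rmin a (c + d / 2)) by (apply Rmin_glb_lt; lra).
    pose proof (Rmin_l a (c + d / 2)). pose proof (Rmin_r a (c + d / 2)).
    apply HP; [right; lra | rewrite Rabs_right; lra].
Qed.

Lemma toward_at_right a c : c < a -> filter_le (at_right c) (toward a c).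
Proof.
  intros Hca P [d [Hd H]]. apply at_right_intro. exists (Rmin d (a - c)); split; [apply Rmin_glb_lt; lra|].
  intros t Ht. pose proof (Rmin_l d (a - c)). pose proof (Rmin_r d (a - c)).
  apply H; [right; lra | rewrite Rabs_right; lra].
Qed.

Lemma toward_at_left a c : a < c -> filter_le (at_left c) (toward a c).
Proof.
  intros Hca P [d [Hd H]]. apply at_left_intro. exists (Rmin d (c - a)); split; [apply Rmin_glb_lt; lra|].
  intros t Ht. pose proof (Rmin_l d (c - a)). pose proof (Rmin_r d (c - a)).
  apply H; [left; lra | rewrite Rabs_left; lra].
Qed.

Lemma between_ho_interval a c : is_interval (between_ho a c).
Proof. intros u v s Hu Hv Hs. unfold between_ho in *. minmax_lra. Qed.

Lemma between_ho_start a c : a <> c -> between_ho a c a.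
Proof. intros H. unfold between_ho. lra. Qed.

Lemma filterlim_R_of_cauchy {F : (R -> Prop) -> Prop} {PF : ProperFilter F} (f : R -> R) :
  (forall eps, 0 < eps -> exists P, F P /\ forall u v, P u -> P v -> Rabs (f v - f u) < eps) ->
  exists y, filterlim f F (locally y).
Proof.
  intros H. apply (@filterlim_locally_cauchy R R_CompleteSpace F PF f).
  intros [eps Heps]. destruct (H eps Heps) as [P [HP HPuv]]. exists P; split; [exact HP|].
  intros u v Hu Hv. apply ball_R. simpl. apply HPuv; auto.
Qed.

Lemma RInt_toward_cvg (f : R -> R) a c M d : a <> c -> 0 < d ->
  (forall t, between_ho a c t -> continuous f t) ->
  (forall t, between_ho a c t -> Rabs (t - c) < d -> Rabs (f t) <= M) ->
  exists y, filterlim (fun t => RInt f a t) (toward a c) (locally y).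
Proof.
  intros Hac Hd Hc Hb. pose proof (toward_proper a c Hac).
  apply filterlim_R_of_cauchy. intros eps Heps.
  set (M1 := Rabs M + 1).
  assert (HM1 : 0 < M1) by (unfold M1; pose proof (Rabs_pos M); lra).
  set (d' := Rmin d (eps / (2 * M1))).
  assert (Hd' : 0 < d') by (apply Rmin_glb_lt; auto; apply Rdiv_lt_0_compat; lra).
  assert (Hdd : d' <= d) by apply Rmin_l.
  assert (Hd2 : d' <= eps / (2 * M1)) by apply Rmin_r.
  clearbody d'.
  exists (fun t => between_ho a c t /\ Rabs (t - c) < d'). split; [exists d'; split; auto|].
  intros u v [Hu Hu'] [Hv Hv'].
  assert (Hex : forall p q, between_ho a c p -> between_ho a c q -> ex_RInt f p q).
  { intros p q Hp Hq. apply ex_RInt_of_continuous. intros s Hs.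
    apply Hc, (between_ho_interval a c p q s); auto. }
  assert (Ha := between_ho_start a c Hac).
  rewrite <- (RInt_Chasles_R f a u v), Rplus_minus_l by auto.
  apply Rabs_lt_between in Hu'. apply Rabs_lt_between in Hv'.
  eapply Rle_lt_trans; [apply (Rabs_RInt_le_const f u v M1); auto|].
  - intros s Hs. eapply Rle_trans.
    + apply Hb; [apply (between_ho_interval a c u v s); auto|]. apply Rabs_lt_between. minmax_lra.
    + unfold M1. pose proof (Rle_abs M). lra.
  - assert (Huv : Rabs (v - u) < eps / M1).
    { apply Rabs_lt_between. assert (eps / M1 = 2 * (eps / (2 * M1))) by (field; lra). lra. }
    apply Rmult_lt_compat_r with (r := M1) in Huv; auto.
    replace (eps / M1 * M1) with eps in Huv by (field; lra). exact Huv.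
Qed.

Lemma CImpInt_of_bounded g a c : a <> c ->
  (forall t, between_ho a c t -> Ccont_at g t) ->
  (exists M d, 0 < d /\ forall t, between_ho a c t -> Rabs (t - c) < d -> Cnorm (g t) <= M) ->
  exists A, CImpInt g a c A.
Proof.
  intros Hac Hc [M [d [Hd Hb]]].
  destruct (RInt_toward_cvg (fun s => Cre (g s)) a c M d) as [yr Hr]; auto.
  { intros t Ht; apply continuous_Cre; auto. }
  { intros t Ht Htd. eapply Rle_trans; [apply Rabs_Cre_le | auto]. }
  destruct (RInt_toward_cvg (fun s => Cim (g s)) a c M d) as [yi Hi]; auto.
  { intros t Ht; apply continuous_Cim; auto. }
  { intros t Ht Htd. eapply Rle_trans; [apply Rabs_Cim_le | auto]. }
  exists (mkC yr yi).
  assert (HL : Cfilterlim (toward a c) (CRInt g a) (mkC yr yi)) by (split; assumption).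
  split; [exact Hac | split].
  - intros t Ht. exists (CRInt g a t).
    destruct (ex_RInt_Cre_Cim_interval (between_ho a c) g a t) as [E1 E2];
      auto using between_ho_interval, between_ho_start.
    apply CInt_CRInt; auto.
  - intros eps Heps. destruct (Cfilterlim_Cnorm_lt _ _ HL eps Heps) as [d' [Hd' H']].
    exists d'; split; auto. intros t u Ht Htd Hu. apply CInt_unique in Hu. subst u. auto.
Qed.

Lemma CImpInt_Cfilterlim g a c A :
  (forall t, between_ho a c t -> Ccont_at g t) -> CImpInt g a c A ->
  Cfilterlim (toward a c) (CRInt g a) A.
Proof.
  intros Hc [Hac [_ H]]. apply Cfilterlim_of_Cnorm_lt. intros eps Heps.
  destruct (H eps Heps) as [d [Hd Hd']]. exists d; split; auto. intros t Ht Htd.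
  apply (Hd' t); auto.
  destruct (ex_RInt_Cre_Cim_interval (between_ho a c) g a t) as [E1 E2];
    auto using between_ho_interval, between_ho_start.
  apply CInt_CRInt; auto.
Qed.

(** * Integrable tails and plane waves *)

Lemma is_RInt_inv_sq K u v : 0 < u -> u <= v -> is_RInt (fun s => K / (s * s)) u v (K * (/ u - / v)).
Proof.
  intros Hu Huv.
  replace (K * (/ u - / v)) with (minus ((fun s => - K / s) v) ((fun s => - K / s) u))
    by (unfold minus, plus, opp; simpl; field; lra).
  apply (@is_RInt_derive R_CompleteNormedModule); intros s Hs;
    rewrite Rmin_left, Rmax_right in Hs by lra.
  - auto_derive; [lra | field; lra].
  - apply (@ex_derive_continuous R_AbsRing R_NormedModule). auto_derive. nra.
Qed.

Lemma Rabs_RInt_tail_le (f : R -> R) u v K T : 0 < T -> T <= u -> u <= v ->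
  (forall s, u <= s <= v -> continuous f s) ->
  (forall s, u <= s <= v -> Rabs (f s) <= K / (s * s)) ->
  Rabs (RInt f u v) <= Rabs K / T.
Proof.
  intros HT HTu Huv Hc Hb.
  assert (Hseg : forall s, Rmin u v <= s <= Rmax u v -> u <= s <= v)
    by (intros s; rewrite Rmin_left, Rmax_right; lra).
  eapply Rle_trans; [apply abs_RInt_le; [lra | apply ex_RInt_of_continuous; auto]|].
  eapply Rle_trans; [apply (RInt_le _ (fun s => K / (s * s))); auto|].
  - apply ex_RInt_of_continuous. intros s Hs. apply continuous_Rabs_comp, Hc; auto.
  - eexists. apply is_RInt_inv_sq; lra.
  - intros s Hs. apply Hb. lra.
  - rewrite (is_RInt_unique _ _ _ _ (is_RInt_inv_sq K u v ltac:(lra) Huv)).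
    assert (/ v <= / u) by (apply Rinv_le_contravar; lra).
    assert (/ u <= / T) by (apply Rinv_le_contravar; lra).
    assert (0 < / v) by (apply Rinv_0_lt_compat; lra).
    unfold Rdiv. pose proof (Rle_abs K). pose proof (Rabs_pos K).
    apply Rle_trans with (Rabs K * (/ u - / v)); [apply Rmult_le_compat_r|apply Rmult_le_compat_l]; lra.
Qed.

Lemma Rabs_RInt_tail (f : R -> R) u v K T : 0 < T -> T <= u -> T <= v ->
  (forall s, Rmin u v <= s <= Rmax u v -> continuous f s) ->
  (forall s, Rmin u v <= s <= Rmax u v -> Rabs (f s) <= K / (s * s)) ->
  Rabs (RInt f u v) <= Rabs K / T.
Proof.
  intros HT Hu Hv Hc Hb. destruct (Rle_or_lt u v) as [Huv|Huv].
  - apply Rabs_RInt_tail_le; auto; intros s Hs; [apply Hc | apply Hb]; minmax_lra.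
  - rewrite <- Rabs_Ropp. change (- RInt f u v) with (opp (RInt f u v)).
    rewrite opp_RInt_swap by (apply ex_RInt_of_continuous; auto).
    apply Rabs_RInt_tail_le; auto; [lra | |]; intros s Hs; [apply Hc | apply Hb]; minmax_lra.
Qed.

Lemma RInt_cvg_p_infty (f : R -> R) a T K : 0 < T ->
  (forall s, a <= s -> continuous f s) ->
  (forall s, T <= s -> Rabs (f s) <= K / (s * s)) ->
  exists y, filterlim (fun t => RInt f a t) (Rbar_locally p_infty) (locally y).
Proof.
  intros HT Hc Hb. apply (@filterlim_R_of_cauchy _ (Rbar_locally_filter p_infty)).
  intros eps Heps.
  set (T1 := Rmax (Rmax a T) (Rabs K / eps + 1)).
  assert (HT1 : T <= T1) by (unfold T1; eapply Rle_trans; [apply Rmax_r|apply Rmax_l]).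
  assert (HT1' : Rabs K / eps + 1 <= T1) by (unfold T1; apply Rmax_r).
  assert (Ha1 : a <= T1) by (unfold T1; eapply Rle_trans; [apply Rmax_l|apply Rmax_l]).
  exists (fun t => T1 < t). split; [exists T1; auto|].
  intros u v Hu Hv.
  assert (Hex : forall p q, a <= p -> a <= q -> ex_RInt f p q).
  { intros p q Hp Hq. apply ex_RInt_of_continuous. intros s Hs. apply Hc. minmax_lra. }
  rewrite <- (RInt_Chasles_R f a u v), Rplus_minus_l by (apply Hex; lra).
  eapply Rle_lt_trans; [apply (Rabs_RInt_tail f u v K T1); try lra|].
  - intros s Hs; apply Hc; minmax_lra.
  - intros s Hs; apply Hb; minmax_lra.
  - pose proof (Rabs_pos K). apply Rmult_lt_reg_r with T1; [lra|].
    unfold Rdiv. rewrite Rmult_assoc, Rinv_l, Rmult_1_r by lra.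
    assert (Rabs K < eps * (Rabs K / eps + 1)) by (field_simplify; lra).
    apply Rlt_le_trans with (eps * (Rabs K / eps + 1)); auto. apply Rmult_le_compat_l; lra.
Qed.

Lemma Cnorm_Cexp_neg_iR r : Cnorm (Cexp (Cneg (Cmul Ci (RtoC r)))) = 1.
Proof. rewrite Cnorm_Cexp. simpl. replace (- (0 * r - 1 * 0)) with 0 by ring. apply exp_0. Qed.

Lemma Cexp_neg_i_split G k a t :
  Cexp (Cneg (Cmul Ci (Cadd G (RtoC (k * (t - a)))))) =
  Cmul (Cexp (Cneg (Cmul Ci (RtoC (k * t))))) (Cmul (Cexp (Cmul Ci (RtoC (k * a)))) (Cexp (Cneg (Cmul Ci G)))).
Proof. rewrite <- !Cexp_add. f_equal. apply Cx_ext; simpl; ring. Qed.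

Lemma plane_wave_p_infty f a k K T rho : 0 < T ->
  (forall s, a <= s -> Ccont_at f s) ->
  (forall s, T <= s -> Cnorm (Csub (f s) (RtoC k)) <= K / (s * s)) ->
  rho <> C0 ->
  exists rp, rp <> C0 /\ forall eps, 0 < eps -> exists M, forall t, M < t ->
    Cnorm (Csub (Cmul rho (Cexp (Cneg (Cmul Ci (CRInt f a t)))))
                (Cmul rp (Cexp (Cneg (Cmul Ci (RtoC (k * t))))))) < eps.
Proof.
  intros HT Hc Hb Hrho.
  set (g s := Csub (f s) (RtoC k)).
  assert (Hcg : forall s, a <= s -> Ccont_at g s).
  { intros s Hs. apply Ccont_at_Cfilterlim. unfold g.
    apply Cfilterlim_add; [apply Ccont_at_Cfilterlim, Hc, Hs | apply Cfilterlim_const]. }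
  destruct (RInt_cvg_p_infty (fun s => Cre (g s)) a T K) as [yr Hyr]; auto.
  { intros s Hs. apply continuous_Cre, Hcg, Hs. }
  { intros s Hs. eapply Rle_trans; [apply Rabs_Cre_le | apply Hb, Hs]. }
  destruct (RInt_cvg_p_infty (fun s => Cim (g s)) a T K) as [yi Hyi]; auto.
  { intros s Hs. apply continuous_Cim, Hcg, Hs. }
  { intros s Hs. eapply Rle_trans; [apply Rabs_Cim_le | apply Hb, Hs]. }
  set (c := Cmul rho (Cexp (Cmul Ci (RtoC (k * a))))).
  exists (Cmul c (Cexp (Cneg (Cmul Ci (mkC yr yi))))).
  split; [repeat apply Cmul_neq0; auto using Cexp_neq0 |].
  intros eps Heps.
  assert (HL : Cfilterlim (Rbar_locally p_infty) (fun t => Cmul c (Cexp (Cneg (Cmul Ci (CRInt g a t)))))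
                 (Cmul c (Cexp (Cneg (Cmul Ci (mkC yr yi)))))).
  { apply Cfilterlim_mul_l, Cfilterlim_exp, Cfilterlim_neg, Cfilterlim_mul_l. split; assumption. }
  destruct (Cfilterlim_Cnorm_lt _ _ HL eps Heps) as [M HM].
  exists (Rmax M a). intros t Ht. pose proof (Rmax_l M a). pose proof (Rmax_r M a).
  assert (Hf : CRInt f a t = Cadd (CRInt g a t) (RtoC (k * (t - a)))).
  { rewrite <- CRInt_add_const.
    - unfold CRInt, g; f_equal; apply RInt_ext; intros; simpl; ring.
    - apply (ex_RInt_Cre_Cim g a t). intros s Hs. apply Hcg. minmax_lra. }
  rewrite Hf, Cexp_neg_i_split.
  replace (Csub _ _) with (Cmul (Cexp (Cneg (Cmul Ci (RtoC (k * t)))))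
     (Csub (Cmul c (Cexp (Cneg (Cmul Ci (CRInt g a t))))) (Cmul c (Cexp (Cneg (Cmul Ci (mkC yr yi)))))))
    by (unfold c; apply Cx_ext; simpl; ring).
  rewrite Cnorm_mul, Cnorm_Cexp_neg_iR, Rmult_1_l. apply HM. lra.
Qed.

Lemma Ccont_at_reflect f s : Ccont_at f (- s) -> Ccont_at (fun u => Cneg (f (- u))) s.
Proof.
  intros Hf. apply Ccont_at_Cfilterlim, Cfilterlim_neg.
  apply Ccont_at_Cfilterlim in Hf. destruct Hf as [H1 H2].
  assert (Hopp : filterlim Ropp (locally s) (locally (- s))).
  { apply (@ex_derive_continuous R_AbsRing R_NormedModule). auto_derive. exact I. }
  split; [exact (filterlim_comp _ _ _ Ropp (fun v => Cre (f v)) _ _ _ Hopp H1)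
         | exact (filterlim_comp _ _ _ Ropp (fun v => Cim (f v)) _ _ _ Hopp H2)].
Qed.

Lemma RInt_reflect (h : R -> R) a t : ex_RInt h a t ->
  RInt (fun s => - h (- s)) (- a) (- t) = RInt h a t.
Proof.
  intros [l Hl]. apply is_RInt_unique. rewrite (is_RInt_unique _ _ _ _ Hl).
  apply (is_RInt_comp_opp h). rewrite !Ropp_involutive. exact Hl.
Qed.

Lemma CRInt_reflect f a t : (forall s, Rmin a t <= s <= Rmax a t -> Ccont_at f s) ->
  CRInt (fun s => Cneg (f (- s))) (- a) (- t) = CRInt f a t.
Proof.
  intros Hc. destruct (ex_RInt_Cre_Cim f a t Hc) as [E1 E2].
  unfold CRInt; simpl. rewrite (RInt_reflect (fun s => Cre (f s))), (RInt_reflect (fun s => Cim (f s)));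
    auto.
Qed.

Lemma plane_wave_m_infty f a k K T rho : 0 < T ->
  (forall s, s <= a -> Ccont_at f s) ->
  (forall s, s <= - T -> Cnorm (Csub (f s) (RtoC k)) <= K / (s * s)) ->
  rho <> C0 ->
  exists rm, rm <> C0 /\ forall eps, 0 < eps -> exists M, forall t, t < M ->
    Cnorm (Csub (Cmul rho (Cexp (Cneg (Cmul Ci (CRInt f a t)))))
                (Cmul rm (Cexp (Cneg (Cmul Ci (RtoC (k * t))))))) < eps.
Proof.
  intros HT Hc Hb Hrho.
  destruct (plane_wave_p_infty (fun s => Cneg (f (- s))) (- a) (- k) K T rho) as [rm [Hrm H]]; auto.
  { intros s Hs. apply Ccont_at_reflect, Hc. lra. }
  { intros s Hs. replace (Csub (Cneg (f (- s))) (RtoC (- k))) with (Cneg (Csub (f (- s)) (RtoC k)))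
      by (apply Cx_ext; simpl; ring).
    rewrite Cnorm_neg.
    replace (s * s) with (- s * - s) by ring. apply Hb. lra. }
  exists rm; split; [exact Hrm|]. intros eps Heps. destruct (H eps Heps) as [M HM].
  exists (Rmin (- M) a). intros t Ht. pose proof (Rmin_l (- M) a). pose proof (Rmin_r (- M) a).
  specialize (HM (- t) ltac:(lra)).
  rewrite CRInt_reflect in HM by (intros s Hs; apply Hc; minmax_lra).
  replace (- k * - t) with (k * t) in HM by ring. exact HM.
Qed.

(** * Derivative at a zero with a pole of the coefficient *)

Lemma diff_quotient_of_factor {F : (R -> Prop) -> Prop} {FF : Filter F} f c Q D :
  f c = C0 -> F (fun t => t <> c) -> F (fun t => f t = Cmul (RtoC (t - c)) (Q t)) ->
  Cfilterlim F Q D ->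
  filterlim (fun t => (Cre (f t) - Cre (f c)) / (t - c)) F (locally (Cre D)) /\
  filterlim (fun t => (Cim (f t) - Cim (f c)) / (t - c)) F (locally (Cim D)).
Proof.
  intros H0 Hne Hf [H1 H2]. rewrite H0; simpl.
  split; (eapply filterlim_ext_loc; [|eassumption]);
    (eapply filter_imp; [|exact (filter_and _ _ Hf Hne)]); intros t [-> Ht]; simpl; field; lra.
Qed.

Lemma at_right_neq c : at_right c (fun t => t <> c).
Proof. apply at_right_intro. exists 1; split; [lra|]. intros; lra. Qed.

Lemma at_left_neq c : at_left c (fun t => t <> c).
Proof. apply at_left_intro. exists 1; split; [lra|]. intros; lra. Qed.

Lemma Cis_derive_of_factor f c D Q1 Q2 : f c = C0 ->
  at_right c (fun t => f t = Cmul (RtoC (t - c)) (Q1 t)) ->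
  at_left c (fun t => f t = Cmul (RtoC (t - c)) (Q2 t)) ->
  Cfilterlim (at_right c) Q1 D -> Cfilterlim (at_left c) Q2 D -> Cis_derive f c D.
Proof.
  intros H0 Hr Hl HQ1 HQ2.
  destruct (diff_quotient_of_factor f c Q1 D H0 (at_right_neq c) Hr HQ1) as [R1 R2].
  destruct (diff_quotient_of_factor f c Q2 D H0 (at_left_neq c) Hl HQ2) as [L1 L2].
  split; apply is_derive_Reals; apply derivable_pt_lim_of_sides; assumption.
Qed.

Lemma Ccont_at_of_sides h c :
  Cfilterlim (at_right c) h (h c) -> Cfilterlim (at_left c) h (h c) -> Ccont_at h c.
Proof.
  intros [R1 R2] [L1 L2]. split; apply continuity_pt_filterlim; apply continuous_of_sides; auto.
Qed.

(* With [psi = (t - c) Q], the pole of [f] cancels the factor [t - c] in [-i f psi]. *)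
Lemma Cfilterlim_pole_mul {F : (R -> Prop) -> Prop} {FF : Filter F} f Q D c M :
  filterlim (fun t => t) F (locally c) -> F (fun t => t <> c) ->
  F (fun t => Cnorm (sub_pole f c t) <= M) -> Cfilterlim F Q D ->
  Cfilterlim F (fun t => Cmul (Cneg (Cmul Ci (f t))) (Cmul (RtoC (t - c)) (Q t))) D.
Proof.
  intros Hid Hne Hb HQ.
  apply (Cfilterlim_ext_loc
    (fun t => Cadd (Cmul (Cneg (Cmul Ci (sub_pole f c t))) (Cmul (RtoC (t - c)) (Q t))) (Q t))).
  - eapply filter_imp; [|exact Hne]. intros t Ht. assert (t - c <> 0) by lra.
    unfold sub_pole. apply Cx_ext; simpl; field; assumption.
  - apply (Cfilterlim_eq _ (Cadd C0 D)); [apply Cfilterlim_add; [|exact HQ] | apply Cx_ext; simpl; ring].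
    apply (Cfilterlim_dominated _ (fun t => Rabs M * (Rabs (t - c) * Cnorm (Q t)))).
    + eapply filter_imp; [|exact Hb]. intros t Ht.
      rewrite !Cnorm_mul, Cnorm_neg, Cnorm_mul, Cnorm_Ci, Cnorm_RtoC.
      pose proof (Cnorm_ge0 (Q t)). pose proof (Rabs_pos (t - c)). pose proof (Rle_abs M).
      rewrite Rmult_1_l. apply Rmult_le_compat_r; nra.
    + replace 0 with (Rabs M * (Rabs (c - c) * Cnorm D)) by (rewrite Rminus_diag, Rabs_R0; ring).
      apply filterlim_Rmult; [apply filterlim_const|]. apply filterlim_Rmult.
      * apply (filterlim_continuous_comp (fun t => t - c) Rabs); [apply continuous_Rabs|].
        apply filterlim_Rminus; [exact Hid | apply filterlim_const].
      * apply Cfilterlim_Cnorm, HQ.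
Qed.

Lemma inI_interval N x j : is_interval (inI N x j).
Proof.
  unfold is_interval, inI; intros a b s [Ha1 Ha2] [Hb1 Hb2] Hs; split.
  - destruct Ha1 as [H|H]; [left; auto|]. destruct Hb1 as [H'|H']; [left; auto|]. right; minmax_lra.
  - destruct Ha2 as [H|H]; [left; auto|]. destruct Hb2 as [H'|H']; [left; auto|]. right; minmax_lra.
Qed.

Lemma inI_locally N x j t : inI N x j t -> locally t (inI N x j).
Proof.
  intros [[H1|H1] [H2|H2]]; apply locally_intro.
  - exists 1; split; [lra|]. intros s _; split; left; auto.
  - exists (x (S j) - t); split; [lra|]. intros s Hs; split; [left; auto|right; lra].
  - exists (t - x j); split; [lra|]. intros s Hs; split; [right; lra|left; auto].
  - exists (Rmin (t - x j) (x (S j) - t)); split; [apply Rmin_glb_lt; lra|].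
    intros s Hs. pose proof (Rmin_l (t - x j) (x (S j) - t)). pose proof (Rmin_r (t - x j) (x (S j) - t)).
    split; right; lra.
Qed.

Lemma inI_gt N x j t : (1 <= j)%nat -> inI N x j t -> x j < t.
Proof. intros Hj [[H|H] _]; [lia|auto]. Qed.

Lemma inI_lt N x j t : (j < N)%nat -> inI N x j t -> t < x (S j).
Proof. intros Hj [_ [H|H]]; [lia|auto]. Qed.

Section Nodes.
Variables (N : nat) (x : nat -> R).
Hypothesis x_incr : forall j, (1 <= j < N)%nat -> x j < x (S j).

Lemma inI_or_node t :
  (exists j, (j <= N)%nat /\ inI N x j t) \/ (exists j, (1 <= j <= N)%nat /\ t = x j).
Proof.
  destruct N as [|N'].
  - left. exists 0%nat. split; [lia|]. split; left; auto.
  - assert (Hk : forall k, (1 <= k <= S N')%nat ->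
      t < x 1%nat \/ (exists j, (1 <= j < k)%nat /\ x j <= t < x (S j)) \/ x k <= t).
    { intros k Hk. induction k as [|k IH]; [lia|].
      destruct (Nat.eq_dec k 0) as [->|Hk0].
      - destruct (Rlt_or_le t (x 1%nat)); [left | right; right]; auto.
      - destruct IH as [H|[[j [Hj1 Hj2]]|H]]; try lia.
        + left; auto.
        + right; left. exists j; split; [lia | auto].
        + destruct (Rlt_or_le t (x (S k))).
          * right; left. exists k; split; [lia | lra].
          * right; right; auto. }
    destruct (Hk (S N') ltac:(lia)) as [H|[[j [Hj [[Hlt|Heq] Hj2]]]|[Hlt|Heq]]].
    + left. exists 0%nat. split; [lia|]. split; [left | right]; auto.
    + left. exists j; split; [lia|]. split; right; auto.
    + right. exists j; split; [lia | auto].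
    + left. exists (S N'); split; [lia|]. split; [right | left]; auto.
    + right. exists (S N'); split; [lia | auto].
Qed.

Lemma at_right_node_inI j : (1 <= j <= N)%nat -> at_right (x j) (inI N x j).
Proof.
  intros Hj. apply at_right_intro. destruct (Nat.eq_dec j N) as [->|Hne].
  - exists 1; split; [lra|]. intros t Ht; split; [right; lra | left; auto].
  - pose proof (x_incr j ltac:(lia)). exists (x (S j) - x j); split; [lra|].
    intros t Ht; split; right; lra.
Qed.

Lemma at_left_node_inI j : (1 <= j <= N)%nat -> at_left (x j) (inI N x (j - 1)).
Proof.
  intros Hj. apply at_left_intro. assert (E : S (j - 1) = j) by lia.
  destruct (Nat.eq_dec j 1) as [->|Hne].
  - exists 1; split; [lra|]. intros t Ht; split; [left; auto | right; simpl; lra].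
  - pose proof (x_incr (j - 1)%nat ltac:(lia)) as H. rewrite E in H.
    exists (x j - x (j - 1)%nat); split; [lra|].
    intros t Ht; split; right; [lra | rewrite E; lra].
Qed.

End Nodes.

Lemma inI_last_ge N x a t : inI N x N a -> a <= t -> inI N x N t.
Proof. intros [[H|H] _] Ht; split; auto; right; lra. Qed.

Lemma inI_first_le N x a t : inI N x 0 a -> t <= a -> inI N x 0 t.
Proof. intros [_ [H|H]] Ht; split; auto; right; lra. Qed.

(** * The solution psi0 *)

Section Solution.
Variables (k0 : R) (N : nat) (x : nat -> R) (w : nat -> R -> Cx) (X : nat -> R).
Hypothesis x_incr : forall j, (1 <= j < N)%nat -> x j < x (S j).
Hypothesis w_cont : forall j, (j <= N)%nat -> Ccont_on_I N x j (w j).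
Hypothesis wminus_bounded : forall j, (1 <= j <= N)%nat ->
  exists M delta, 0 < delta /\
    forall t, inI N x (j - 1) t -> x j - delta < t -> Cnorm (wminus w x j t) <= M.
Hypothesis wplus_bounded : forall j, (1 <= j <= N)%nat ->
  exists M delta, 0 < delta /\
    forall t, inI N x j t -> t < x j + delta -> Cnorm (wplus w x j t) <= M.
Hypothesis X_inI : forall j, (j <= N)%nat -> inI N x j (X j).

Lemma node_lt_X j : (1 <= j <= N)%nat -> x j < X j.
Proof. intros Hj. apply (inI_gt N x j); [lia | apply X_inI; lia]. Qed.

Lemma X_lt_node j : (1 <= j <= N)%nat -> X (j - 1)%nat < x j.
Proof.
  intros Hj. replace j with (S (j - 1)) at 2 by lia.
  apply (inI_lt N x (j - 1)); [lia | apply X_inI; lia].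
Qed.

Lemma between_X_node_right j t : (1 <= j <= N)%nat -> between_ho (X j) (x j) t ->
  inI N x j t /\ x j < t.
Proof.
  intros Hj Hb. pose proof (node_lt_X j Hj). destruct (X_inI j ltac:(lia)) as [_ HX].
  destruct Hb as [Hb|Hb]; [lra|].
  split; [split; [right | destruct HX; [left | right]] | ]; auto; lra.
Qed.

Lemma between_X_node_left j t : (1 <= j <= N)%nat -> between_ho (X (j - 1)%nat) (x j) t ->
  inI N x (j - 1) t /\ t < x j.
Proof.
  intros Hj Hb. pose proof (X_lt_node j Hj). destruct (X_inI (j - 1) ltac:(lia)) as [HX _].
  unfold inI. replace (S (j - 1)) with j by lia.
  destruct Hb as [Hb|Hb]; [|lra].
  split; [split; [destruct HX; [left | right] | right] | ]; auto; lra.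
Qed.

Lemma wplus_Ccont j t : (1 <= j <= N)%nat -> between_ho (X j) (x j) t -> Ccont_at (wplus w x j) t.
Proof.
  intros Hj Ht. destruct (between_X_node_right j t Hj Ht) as [H1 H2].
  apply (Ccont_sub_pole (w j)); [apply w_cont; auto; lia | lra].
Qed.

Lemma wminus_Ccont j t : (1 <= j <= N)%nat -> between_ho (X (j - 1)%nat) (x j) t ->
  Ccont_at (wminus w x j) t.
Proof.
  intros Hj Ht. destruct (between_X_node_left j t Hj Ht) as [H1 H2].
  apply (Ccont_sub_pole (w (j - 1)%nat)); [apply w_cont; auto; lia | lra].
Qed.

Lemma wplus_CImpInt j : (1 <= j <= N)%nat -> exists A, CImpInt (wplus w x j) (X j) (x j) A.
Proof.
  intros Hj. pose proof (node_lt_X j Hj).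
  apply CImpInt_of_bounded; [lra | intros t; apply wplus_Ccont, Hj |].
  destruct (wplus_bounded j Hj) as [M [d [Hd HM]]]. exists M, d; split; auto.
  intros t Ht Htd. destruct (between_X_node_right j t Hj Ht). apply Rabs_lt_between in Htd.
  apply HM; auto; lra.
Qed.

Lemma wminus_CImpInt j : (1 <= j <= N)%nat -> exists B, CImpInt (wminus w x j) (X (j - 1)%nat) (x j) B.
Proof.
  intros Hj. pose proof (X_lt_node j Hj).
  apply CImpInt_of_bounded; [lra | intros t; apply wminus_Ccont, Hj |].
  destruct (wminus_bounded j Hj) as [M [d [Hd HM]]]. exists M, d; split; auto.
  intros t Ht Htd. destruct (between_X_node_left j t Hj Ht). apply Rabs_lt_between in Htd.
  apply HM; auto; lra.
Qed.

Variables (A B rho : nat -> Cx) (psi0 : R -> Cx).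
Hypothesis A_lim : forall j, (1 <= j <= N)%nat -> CImpInt (wplus w x j) (X j) (x j) (A j).
Hypothesis B_lim : forall j, (1 <= j <= N)%nat ->
  CImpInt (wminus w x j) (X (j - 1)%nat) (x j) (B j).
Hypothesis rho_rec : forall j, (1 <= j <= N)%nat ->
  rho j = Cmul (Cmul (rho (j - 1)%nat) (RtoC ((X j - x j) / (X (j - 1)%nat - x j))))
               (Cexp (Csub (Cmul Ci (A j)) (Cmul Ci (B j)))).
Hypothesis psi0_def : forall j t v, (j <= N)%nat -> inI N x j t -> CInt (w j) (X j) t v ->
  psi0 t = Cmul (rho j) (Cexp (Cneg (Cmul Ci v))).
Hypothesis psi0_node : forall j, (1 <= j <= N)%nat -> psi0 (x j) = C0.

Lemma psi0_inI j t : (j <= N)%nat -> inI N x j t ->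
  psi0 t = Cmul (rho j) (Cexp (Cneg (Cmul Ci (CRInt (w j) (X j) t)))).
Proof.
  intros Hj Ht. apply (psi0_def j t (CRInt (w j) (X j) t) Hj Ht).
  destruct (ex_RInt_Cre_Cim_interval (inI N x j) (w j) (X j) t (inI_interval N x j) (w_cont j Hj)
    (X_inI j Hj) Ht) as [E1 E2].
  apply CInt_CRInt; assumption.
Qed.

Lemma psi0_derive_inI j t : (j <= N)%nat -> inI N x j t ->
  Cis_derive psi0 t (Cmul (Cneg (Cmul Ci (w j t))) (psi0 t)).
Proof.
  intros Hj Ht.
  apply (Cis_derive_ext_loc (fun s => Cmul (rho j) (Cexp (Cneg (Cmul Ci (CRInt (w j) (X j) s)))))).
  - eapply filter_imp; [|apply (inI_locally N x j t Ht)]. intros s Hs. symmetry; apply psi0_inI; auto.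
  - eapply Cis_derive_eq.
    + apply Cis_derive_mul; [apply Cis_derive_const|].
      apply Cis_derive_exp, Cis_derive_neg, Cis_derive_mul; [apply Cis_derive_const|].
      apply (Cis_derive_CRInt (inI N x j));
        [apply inI_interval | apply inI_locally, Ht | apply w_cont, Hj | apply X_inI, Hj | exact Ht].
    + rewrite (psi0_inI j t) by auto. apply Cx_ext; simpl; ring.
Qed.

(* The common value at [x j] of the one-sided limits of [psi0 t / (t - x j)]. *)
Definition node_slope j : Cx :=
  Cmul (rho j) (Cmul (RtoC (/ (X j - x j))) (Cexp (Cneg (Cmul Ci (A j))))).

Definition node_factor_right j t : Cx :=
  Cmul (rho j) (Cmul (RtoC (/ (X j - x j))) (Cexp (Cneg (Cmul Ci (CRInt (wplus w x j) (X j) t))))).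

Definition node_factor_left j t : Cx :=
  Cmul (rho (j - 1)%nat) (Cmul (RtoC (/ (X (j - 1)%nat - x j)))
    (Cexp (Cneg (Cmul Ci (CRInt (wminus w x j) (X (j - 1)%nat) t))))).

(* This is exactly what the recursion for [rho] is designed for. *)
Lemma node_slope_left j : (1 <= j <= N)%nat ->
  node_slope j = Cmul (rho (j - 1)%nat) (Cmul (RtoC (/ (X (j - 1)%nat - x j))) (Cexp (Cneg (Cmul Ci (B j))))).
Proof.
  intros Hj. pose proof (node_lt_X j Hj). pose proof (X_lt_node j Hj).
  unfold node_slope. rewrite (rho_rec j Hj).
  replace (Cexp (Cneg (Cmul Ci (B j))))
    with (Cmul (Cexp (Csub (Cmul Ci (A j)) (Cmul Ci (B j)))) (Cexp (Cneg (Cmul Ci (A j)))))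
    by (rewrite <- Cexp_add; f_equal; apply Cx_ext; simpl; ring).
  generalize (Cexp (Csub (Cmul Ci (A j)) (Cmul Ci (B j)))) (Cexp (Cneg (Cmul Ci (A j)))) (rho (j - 1)%nat).
  intros [e1 e2] [f1 f2] [r1 r2]. apply Cx_ext; simpl; field; lra.
Qed.

Lemma psi0_factor_right j t : (1 <= j <= N)%nat -> inI N x j t ->
  psi0 t = Cmul (RtoC (t - x j)) (node_factor_right j t).
Proof.
  intros Hj Ht. pose proof (node_lt_X j Hj).
  rewrite (psi0_inI j t) by (auto; lia). rewrite (Cexp_CRInt_sub_pole (w j) (x j) (X j) t).
  - unfold node_factor_right. change (sub_pole (w j) (x j)) with (wplus w x j). generalize (Cexp (Cneg (Cmul Ci (CRInt (wplus w x j) (X j) t)))).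
    intros e. apply Cx_ext; simpl; field; lra.
  - intros s Hs.
    assert (Hs' : inI N x j s) by (apply (inI_interval N x j (X j) t s); auto; apply X_inI; lia).
    split; [apply w_cont; auto; lia|].
    apply Rdiv_lt_0_compat; [pose proof (inI_gt N x j s ltac:(lia) Hs')|]; lra.
Qed.

Lemma psi0_factor_left j t : (1 <= j <= N)%nat -> inI N x (j - 1) t ->
  psi0 t = Cmul (RtoC (t - x j)) (node_factor_left j t).
Proof.
  intros Hj Ht. pose proof (X_lt_node j Hj).
  rewrite (psi0_inI (j - 1) t) by (auto; lia).
  rewrite (Cexp_CRInt_sub_pole (w (j - 1)%nat) (x j) (X (j - 1)%nat) t).
  - unfold node_factor_left. change (sub_pole (w (j - 1)%nat) (x j)) with (wminus w x j).
    generalize (Cexp (Cneg (Cmul Ci (CRInt (wminus w x j) (X (j - 1)%nat) t)))).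
    intros e. apply Cx_ext; simpl; field; lra.
  - intros s Hs.
    assert (Hs' : inI N x (j - 1) s)
      by (apply (inI_interval N x (j - 1) (X (j - 1)%nat) t s); auto; apply X_inI; lia).
    split; [apply w_cont; auto; lia|].
    pose proof (inI_lt N x (j - 1) s ltac:(lia) Hs') as Hsl. replace (S (j - 1)) with j in Hsl by lia.
    replace ((s - x j) / (X (j - 1)%nat - x j)) with ((x j - s) / (x j - X (j - 1)%nat)) by (field; lra).
    apply Rdiv_lt_0_compat; lra.
Qed.

Lemma node_factor_right_lim j : (1 <= j <= N)%nat ->
  Cfilterlim (at_right (x j)) (node_factor_right j) (node_slope j).
Proof.
  intros Hj. apply Cfilterlim_mul_l, Cfilterlim_mul_l, Cfilterlim_exp, Cfilterlim_neg, Cfilterlim_mul_l.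
  apply (Cfilterlim_filter_le (toward (X j) (x j))); [apply toward_at_right, node_lt_X, Hj|].
  apply CImpInt_Cfilterlim; [intros t; apply wplus_Ccont, Hj | apply A_lim, Hj].
Qed.

Lemma node_factor_left_lim j : (1 <= j <= N)%nat ->
  Cfilterlim (at_left (x j)) (node_factor_left j) (node_slope j).
Proof.
  intros Hj. rewrite node_slope_left by exact Hj.
  apply Cfilterlim_mul_l, Cfilterlim_mul_l, Cfilterlim_exp, Cfilterlim_neg, Cfilterlim_mul_l.
  apply (Cfilterlim_filter_le (toward (X (j - 1)%nat) (x j))); [apply toward_at_left, X_lt_node, Hj|].
  apply CImpInt_Cfilterlim; [intros t; apply wminus_Ccont, Hj | apply B_lim, Hj].
Qed.

Lemma psi0_derive_node j : (1 <= j <= N)%nat -> Cis_derive psi0 (x j) (node_slope j).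
Proof.
  intros Hj. apply (Cis_derive_of_factor psi0 (x j) _ (node_factor_right j) (node_factor_left j)).
  - apply psi0_node, Hj.
  - eapply filter_imp; [|apply (at_right_node_inI N x x_incr j Hj)]. intros t; apply psi0_factor_right, Hj.
  - eapply filter_imp; [|apply (at_left_node_inI N x x_incr j Hj)]. intros t; apply psi0_factor_left, Hj.
  - apply node_factor_right_lim, Hj.
  - apply node_factor_left_lim, Hj.
Qed.

Lemma psi0_derive_right_lim j : (1 <= j <= N)%nat ->
  Cfilterlim (at_right (x j)) (fun t => Cmul (Cneg (Cmul Ci (w j t))) (psi0 t)) (node_slope j).
Proof.
  intros Hj. destruct (wplus_bounded j Hj) as [M [d [Hd HM]]].
  assert (HI := at_right_node_inI N x x_incr j Hj).
  apply (Cfilterlim_ext_loc (fun t => Cmul (Cneg (Cmul Ci (w j t))) (Cmul (RtoC (t - x j)) (node_factor_right j t)))).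
  - eapply filter_imp; [|exact HI]. intros t Ht. rewrite <- psi0_factor_right; auto.
  - apply (Cfilterlim_pole_mul _ _ _ _ M); auto using filterlim_id_at_right, at_right_neq, node_factor_right_lim.
    generalize (filter_and _ _ HI (at_right_lt (x j) d Hd)). apply filter_imp.
    intros t [Ht Htd]. apply HM; auto.
Qed.

Lemma psi0_derive_left_lim j : (1 <= j <= N)%nat ->
  Cfilterlim (at_left (x j)) (fun t => Cmul (Cneg (Cmul Ci (w (j - 1)%nat t))) (psi0 t)) (node_slope j).
Proof.
  intros Hj. destruct (wminus_bounded j Hj) as [M [d [Hd HM]]].
  assert (HI := at_left_node_inI N x x_incr j Hj).
  apply (Cfilterlim_ext_loc
    (fun t => Cmul (Cneg (Cmul Ci (w (j - 1)%nat t))) (Cmul (RtoC (t - x j)) (node_factor_left j t)))).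
  - eapply filter_imp; [|exact HI]. intros t Ht. rewrite <- psi0_factor_left; auto.
  - apply (Cfilterlim_pole_mul _ _ _ _ M); auto using filterlim_id_at_left, at_left_neq, node_factor_left_lim.
    generalize (filter_and _ _ HI (at_left_gt (x j) d Hd)). apply filter_imp.
    intros t [Ht Htd]. apply HM; auto.
Qed.

Lemma psi0_derivable t : Cis_derive psi0 t (CDerive psi0 t).
Proof.
  destruct (inI_or_node N x x_incr t) as [[j [Hj Ht]]|[j [Hj ->]]].
  - pose proof (psi0_derive_inI j t Hj Ht) as H. rewrite (Cis_derive_unique _ _ _ H). exact H.
  - pose proof (psi0_derive_node j Hj) as H. rewrite (Cis_derive_unique _ _ _ H). exact H.
Qed.

Lemma CDerive_psi0_inI j t : (j <= N)%nat -> inI N x j t ->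
  CDerive psi0 t = Cmul (Cneg (Cmul Ci (w j t))) (psi0 t).
Proof. intros Hj Ht. apply Cis_derive_unique, psi0_derive_inI; auto. Qed.

Lemma CDerive_psi0_continuous t : Ccont_at (CDerive psi0) t.
Proof.
  destruct (inI_or_node N x x_incr t) as [[j [Hj Ht]]|[j [Hj ->]]].
  - apply Ccont_at_Cfilterlim. rewrite (CDerive_psi0_inI j t Hj Ht).
    apply (Cfilterlim_ext_loc (fun s => Cmul (Cneg (Cmul Ci (w j s))) (psi0 s))).
    + eapply filter_imp; [|apply (inI_locally N x j t Ht)]. intros s Hs. symmetry; apply CDerive_psi0_inI; auto.
    + apply Cfilterlim_mul; [apply Cfilterlim_neg, Cfilterlim_mul_l|]; apply Ccont_at_Cfilterlim.
      * apply w_cont; auto.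
      * eapply Cis_derive_Ccont_at, psi0_derive_inI; eauto.
  - pose proof (Cis_derive_unique _ _ _ (psi0_derive_node j Hj)) as Hslope.
    apply Ccont_at_of_sides; rewrite Hslope; [eapply Cfilterlim_ext_loc, psi0_derive_right_lim, Hj
                             | eapply Cfilterlim_ext_loc, psi0_derive_left_lim, Hj].
    + eapply filter_imp; [|apply (at_right_node_inI N x x_incr j Hj)].
      intros t Ht. symmetry; apply CDerive_psi0_inI; auto; lia.
    + eapply filter_imp; [|apply (at_left_node_inI N x x_incr j Hj)].
      intros t Ht. symmetry; apply CDerive_psi0_inI; auto; lia.
Qed.

Lemma psi0_schrodinger j t dw : (j <= N)%nat -> inI N x j t -> CDeriv (w j) t dw ->
  let U := Cadd (Csub (Cneg (Cmul (w j t) (w j t))) (Cmul Ci dw)) (RtoC (k0 * k0)) in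
  exists d2 : Cx, CDeriv (CDerive psi0) t d2 /\
    Cadd (Cneg d2) (Cmul U (psi0 t)) = Cmul (RtoC (k0 * k0)) (psi0 t).
Proof.
  intros Hj Ht Hdw U.
  exists (Cadd (Cmul (Cneg (Cmul Ci dw)) (psi0 t))
               (Cmul (Cneg (Cmul Ci (w j t))) (Cmul (Cneg (Cmul Ci (w j t))) (psi0 t)))).
  split.
  - apply Cis_derive_CDeriv.
    apply (Cis_derive_ext_loc (fun s => Cmul (Cneg (Cmul Ci (w j s))) (psi0 s))).
    + eapply filter_imp; [|apply (inI_locally N x j t Ht)]. intros s Hs. symmetry; apply CDerive_psi0_inI; auto.
    + eapply Cis_derive_eq; [apply Cis_derive_mul; [apply Cis_derive_neg, Cis_derive_mul|]|].
      * apply Cis_derive_const.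
      * apply Cis_derive_CDeriv, Hdw.
      * apply (psi0_derive_inI j t); auto.
      * apply Cx_ext; simpl; ring.
  - unfold U. apply Cx_ext; simpl; ring.
Qed.

Hypothesis rho0_neq0 : rho 0%nat <> C0.

Lemma rho_neq0 j : (j <= N)%nat -> rho j <> C0.
Proof.
  induction j as [|j IH]; intros Hj; [exact rho0_neq0|].
  pose proof (node_lt_X (S j) ltac:(lia)). pose proof (X_lt_node (S j) ltac:(lia)).
  rewrite rho_rec by lia. replace (S j - 1)%nat with j in * by lia.
  repeat apply Cmul_neq0; auto using Cexp_neq0 with arith.
  apply RtoC_neq0. unfold Rdiv. apply Rmult_integral_contrapositive; split; [lra|].
  apply Rinv_neq_0_compat; lra.
Qed.

Lemma psi0_asymptotics_p_infty :
  (exists K R0, forall t, inI N x N t -> R0 <= t -> Cnorm (Csub (w N t) (RtoC (- k0))) <= K / (t * t)) ->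
  exists rhop, rhop <> C0 /\ forall eps, 0 < eps -> exists M, forall t, M < t ->
    Cnorm (Csub (psi0 t) (Cmul rhop (Cexp (Cmul Ci (RtoC (k0 * t)))))) < eps.
Proof.
  intros [K [R0 HK]]. assert (HXN := X_inI N (le_n N)).
  set (T := Rmax (Rmax R0 1) (X N)).
  assert (HT1 : 1 <= T /\ R0 <= T /\ X N <= T) by (unfold T; minmax_lra).
  destruct (plane_wave_p_infty (w N) (X N) (- k0) K T (rho N)) as [rp [Hrp H]].
  - lra.
  - intros s Hs. apply w_cont, (inI_last_ge N x (X N)); auto.
  - intros s Hs. apply HK; [apply (inI_last_ge N x (X N)); [exact HXN | lra] | lra].
  - apply rho_neq0; auto.
  - exists rp; split; [exact Hrp|]. intros eps Heps. destruct (H eps Heps) as [M HM].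
    exists (Rmax M (X N)). intros t Ht.
    rewrite (psi0_inI N t) by first [lia | apply (inI_last_ge N x (X N)); [exact HXN | minmax_lra]].
    replace (Cexp (Cmul Ci (RtoC (k0 * t)))) with (Cexp (Cneg (Cmul Ci (RtoC (- k0 * t)))))
      by (f_equal; apply Cx_ext; simpl; ring).
    apply HM. minmax_lra.
Qed.

Lemma psi0_asymptotics_m_infty :
  (exists K R0, forall t, inI N x 0 t -> t <= R0 -> Cnorm (Csub (w 0%nat t) (RtoC k0)) <= K / (t * t)) ->
  exists rhom, rhom <> C0 /\ forall eps, 0 < eps -> exists M, forall t, t < M ->
    Cnorm (Csub (psi0 t) (Cmul rhom (Cexp (Cneg (Cmul Ci (RtoC (k0 * t))))))) < eps.
Proof.
  intros [K [R0 HK]]. assert (HX0 := X_inI 0 (Nat.le_0_l N)).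
  set (T := Rmax (Rmax (- R0) 1) (- X 0%nat)).
  assert (HT1 : 1 <= T /\ - R0 <= T /\ - X 0%nat <= T) by (unfold T; minmax_lra).
  destruct (plane_wave_m_infty (w 0%nat) (X 0%nat) k0 K T (rho 0%nat)) as [rm [Hrm H]]; auto.
  - lra.
  - intros s Hs. apply w_cont, (inI_first_le N x (X 0%nat)); auto; lia.
  - intros s Hs. apply HK; [apply (inI_first_le N x (X 0%nat)); [exact HX0 | lra] | lra].
  - exists rm; split; [exact Hrm|]. intros eps Heps. destruct (H eps Heps) as [M HM].
    exists (Rmin M (X 0%nat)). intros t Ht.
    rewrite (psi0_inI 0 t) by first [lia | apply (inI_first_le N x (X 0%nat)); [exact HX0 | minmax_lra]].
    apply HM. minmax_lra.
Qed.

End Solution.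

Theorem theorem2
  (k0 : R) (N : nat) (x : nat -> R) (w : nat -> R -> Cx)
  (X : nat -> R) (rho0 : Cx) :
  k0 <> 0 ->
  (forall j, (1 <= j < N)%nat -> x j < x (S j)) ->
  (forall j, (j <= N)%nat -> Ccont_on_I N x j (w j)) ->
  (forall j, (j <= N)%nat -> Cpw_diff_on_I N x j (w j)) ->
  (forall j, (1 <= j <= N)%nat ->
     exists M delta, 0 < delta /\
       forall t, inI N x (j - 1) t -> x j - delta < t ->
         Cnorm (wminus w x j t) <= M) ->
  (forall j, (1 <= j <= N)%nat ->
     exists M delta, 0 < delta /\
       forall t, inI N x j t -> t < x j + delta ->
         Cnorm (wplus w x j t) <= M) ->
  (exists K R0, forall t, inI N x 0 t -> t <= R0 ->
       Cnorm (Csub (w 0%nat t) (RtoC k0)) <= K / (t * t)) ->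
  (exists K R0, forall t, inI N x N t -> R0 <= t ->
       Cnorm (Csub (w N t) (RtoC (- k0))) <= K / (t * t)) ->
  (forall j, (j <= N)%nat -> inI N x j (X j)) ->
  rho0 <> C0 ->
  ((forall j, (1 <= j <= N)%nat ->
      exists A, CImpInt (wplus w x j) (X j) (x j) A) /\
   (forall j, (1 <= j <= N)%nat ->
      exists B, CImpInt (wminus w x j) (X (j - 1)%nat) (x j) B)) /\
  (forall (A B : nat -> Cx) (rho : nat -> Cx) (psi0 : R -> Cx),
     (forall j, (1 <= j <= N)%nat -> CImpInt (wplus w x j) (X j) (x j) (A j)) ->
     (forall j, (1 <= j <= N)%nat ->
        CImpInt (wminus w x j) (X (j - 1)%nat) (x j) (B j)) ->
     rho 0%nat = rho0 ->
     (forall j, (1 <= j <= N)%nat ->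
        rho j = Cmul (Cmul (rho (j - 1)%nat)
                           (RtoC ((X j - x j) / (X (j - 1)%nat - x j))))
                     (Cexp (Csub (Cmul Ci (A j)) (Cmul Ci (B j))))) ->
     (forall j t v, (j <= N)%nat -> inI N x j t -> CInt (w j) (X j) t v ->
        psi0 t = Cmul (rho j) (Cexp (Cneg (Cmul Ci v)))) ->
     (forall j, (1 <= j <= N)%nat -> psi0 (x j) = C0) ->
     (exists dpsi : R -> Cx,
        (forall t, CDeriv psi0 t (dpsi t)) /\
        (forall t, Ccont_at dpsi t) /\
        (forall j t dw, (j <= N)%nat -> inI N x j t -> CDeriv (w j) t dw ->
           let U := Cadd (Csub (Cneg (Cmul (w j t) (w j t))) (Cmul Ci dw))
                         (RtoC (k0 * k0)) in
           exists d2 : Cx, CDeriv dpsi t d2 /\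
             Cadd (Cneg d2) (Cmul U (psi0 t)) = Cmul (RtoC (k0 * k0)) (psi0 t))) /\
     (exists rhop rhom : Cx, rhop <> C0 /\ rhom <> C0 /\
        (forall eps, 0 < eps -> exists M, forall t, M < t ->
           Cnorm (Csub (psi0 t) (Cmul rhop (Cexp (Cmul Ci (RtoC (k0 * t)))))) < eps) /\
        (forall eps, 0 < eps -> exists M, forall t, t < M ->
           Cnorm (Csub (psi0 t) (Cmul rhom (Cexp (Cneg (Cmul Ci (RtoC (k0 * t)))))))
             < eps))).
Proof.
  intros _ Hord Hcont _ Hbm Hbp Hdecay_m Hdecay_p HX Hrho0.
  split; [split; intros j Hj; [eapply wplus_CImpInt | eapply wminus_CImpInt]; eassumption|].
  intros A B rho psi0 HA HB Hr0 Hrec Hpsi Hnode.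
  split.
  - exists (CDerive psi0). split; [|split].
    + intros t. apply Cis_derive_CDeriv. eapply psi0_derivable; eassumption.
    + intros t. eapply CDerive_psi0_continuous; eassumption.
    + intros j t dw Hj Ht Hdw. eapply psi0_schrodinger; eassumption.
  - subst rho0.
    edestruct psi0_asymptotics_p_infty as [rhop [Hp Hlimp]]; try eassumption.
    edestruct psi0_asymptotics_m_infty as [rhom [Hm Hlimm]]; try eassumption.
    exists rhop, rhom. auto.
Qed.
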